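(* Let $k\ge 1$ and let $H_{2^k}$ be the Sylvester–Hadamard matrix of order $2^k$, with rows and columns indexed by $0,1,\ldots,2^k-1$; denote its $r$-th row by $H_{2^k}^{(r)}$. For an integer $j=\sum_{i=0}^{k-1}j_i2^i$ with $j_i\in\{0,1\}$ and $0\le j\le 2^k-1$, put $z_j=(j_0,j_1,\ldots,j_{k-1})\in\mathbb{F}_2^k$. Let $W=(w_0,w_1,\ldots,w_{2^k-1})$ with $w_i\in\{1,-1\}$ for all $i$. Then $W=\pm H_{2^k}^{(r)}$ for some $r\in\{0,\ldots,2^k-1\}$ if and only if for any four distinct integers $j,c,l,v\in\{0,\ldots,2^k-1\}$ with $z_j\oplus z_c\oplus z_l\oplus z_v=\mathbf{0}$ we have $w_jw_c=w_lw_v$.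
   Context: The Sylvester–Hadamard matrix is defined recursively by $H_1=(1)$, $H_2=\begin{pmatrix}1&1\\1&-1\end{pmatrix}$ and $H_{2^k}=\begin{pmatrix}H_{2^{k-1}}&H_{2^{k-1}}\\H_{2^{k-1}}&-H_{2^{k-1}}\end{pmatrix}$. Equivalently, $H_{2^k}^{(r)}=((-1)^{z_0\cdot z_r},(-1)^{z_1\cdot z_r},\ldots,(-1)^{z_{2^k-1}\cdot z_r})$, where $\cdot$ is the dot product on $\mathbb{F}_2^k$. *)

From mathcomp Require Import all_boot all_order all_algebra.
Set Implicit Arguments. Unset Strict Implicit. Unset Printing Implicit Defensive.
Import GRing.Theory Num.Theory.
Local Open Scope ring_scope.

(* Entries of the Sylvester-Hadamard matrix H_{2^k}, following the recursive
   definition H_{2^(k+1)} = [[H, H], [H, -H]] with H = H_{2^k}, H_1 = (1). *)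
Fixpoint sh_entry (k r c : nat) : int :=
  match k with
  | 0 => 1
  | k'.+1 =>
      let s := if ((2 ^ k' <= r) && (2 ^ k' <= c))%N then -1 else 1 in
      s * sh_entry k' (r %% 2 ^ k') (c %% 2 ^ k')
  end.

Definition sylvester_hadamard (k : nat) : 'M[int]_(2 ^ k) :=
  \matrix_(r < 2 ^ k, c < 2 ^ k) sh_entry k r c.

Definition zvec (k : nat) (j : nat) : 'rV['F_2]_k :=
  \row_(i < k) ((odd (j %/ 2 ^ i))%:R : 'F_2).

(* Identify the index j with z_j in F_2^k. Then the r-th row of H_{2^k} is the
   character x |-> (-1)^(z_r . x), and the claim is that a ±1-valued function
   on F_2^k is ± a character iff it satisfies the four-point condition. One
   direction holds because x + y = z + w whenever x + y + z + w = 0. For the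
   other, applied to the distinct points 0, x + y, x, y, the condition says
   that f(0) f is multiplicative, and a ±1-valued homomorphism on F_2^k is
   determined by its values on the unit vectors, which read off z_r. *)

From mathcomp Require Import all_boot all_order all_algebra.
Set Implicit Arguments. Unset Strict Implicit. Unset Printing Implicit Defensive.
Import GRing.Theory Num.Theory.
Local Open Scope ring_scope.

Section ExponentTwoGroup.

Variable V : zmodType.
Hypothesis addxx : forall x : V, x + x = 0.

Definition four_point (f : V -> int) :=
  forall x y z w : V, uniq [:: x; y; z; w] -> x + y + z + w = 0 ->
  f x * f y = f z * f w.

Lemma multiplicative_four_point (f : V -> int) :
  (forall x y, f (x + y) = f x * f y) -> four_point f.
Proof.
move=> fM x y z w _ sum0; rewrite -!fM; congr f.
by rewrite -[z + w]add0r -sum0 -(addrA (x + y)) -addrA addxx addr0.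
Qed.

Lemma four_point_multiplicative (f : V -> int) :
  (forall x, f x * f x = 1) -> four_point f ->
  forall x y, f 0 * f (x + y) = f x * f y.
Proof.
move=> fsq f4 x y.
have [->|x0] := eqVneq x 0; first by rewrite add0r.
have [->|y0] := eqVneq y 0; first by rewrite addr0 mulrC.
have [<-|xy] := eqVneq x y; first by rewrite addxx !fsq.
apply: f4; last by rewrite add0r -addrA addxx.
have xy0 : (x + y == 0) = (x == y).
  by rewrite addr_eq0 -[- y]add0r -(addxx y) addrK.
have xyx : (x + y == x) = (y == 0) by rewrite -{2}[x]addr0 (inj_eq (addrI x)).
have xyy : (x + y == y) = (x == 0) by rewrite -{2}[y]add0r (inj_eq (addIr y)).
by rewrite /= !inE !negb_or !(eq_sym 0) xy0 xyx xyy x0 y0 xy.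
Qed.

Lemma four_point_transport (I : eqType) (g : I -> V) (h : V -> I)
    (gK : cancel g h) (hK : cancel h g) (W : I -> int) :
  four_point (W \o h) <->
  (forall j c l v : I, uniq [:: j; c; l; v] ->
     g j + g c + g l + g v = 0 -> W j * W c = W l * W v).
Proof.
split=> [f4 j c l v uq sum0 | W4 x y z w uq sum0].
  have := f4 (g j) (g c) (g l) (g v); rewrite /= !gK; apply=> //.
  by rewrite -(map_inj_uniq (can_inj gK)) in uq.
apply: W4; last by rewrite !hK.
by rewrite -(map_inj_uniq (can_inj hK)) in uq.
Qed.

End ExponentTwoGroup.

Lemma F2_cases (x : 'F_2) : x = 0 \/ x = 1.
Proof. by case: x => [[|[|m]]] //= ?; [left | right]; apply/val_inj. Qed.

Lemma addxx_rowF2 k (x : 'rV['F_2]_k) : x + x = 0.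
Proof. by apply/rowP => i; rewrite !mxE addrr_pchar2 // pchar_Fp. Qed.

Definition sgnF2 (x : 'F_2) : int := if x == 0 then 1 else -1.

Lemma sgnF2D x y : sgnF2 (x + y) = sgnF2 x * sgnF2 y.
Proof.
have F2_11 : (1 + 1 : 'F_2) = 0 by apply/val_inj.
by case: (F2_cases x) => ->; case: (F2_cases y) => ->;
  rewrite /sgnF2 ?F2_11 ?addr0 ?add0r.
Qed.

Definition dotF2 k (a x : 'rV['F_2]_k) : 'F_2 := \sum_(i < k) a 0 i * x 0 i.

Definition charF2 k (a x : 'rV['F_2]_k) : int := sgnF2 (dotF2 a x).

Lemma charF2D k (a x y : 'rV['F_2]_k) :
  charF2 a (x + y) = charF2 a x * charF2 a y.
Proof.
rewrite /charF2 /dotF2 -sgnF2D -big_split; congr sgnF2.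
by apply: eq_bigr => i _; rewrite mxE mulrDr.
Qed.

Lemma sign_hom_charF2 k (f : 'rV['F_2]_k -> int) :
  (forall x, f x = 1 \/ f x = -1) -> (forall x y, f (x + y) = f x * f y) ->
  exists a, f =1 charF2 a.
Proof.
move=> fpm fM.
have f0 : f 0 = 1.
  have := fM 0 0; rewrite addr0.
  by case: (fpm 0) => -> //; rewrite mulrNN mulr1.
exists (\row_i (if f 'e_i == 1 then 0 else 1)) => x.
rewrite {1}(row_sum_delta x) (big_morph f fM f0) /charF2 /dotF2.
rewrite (big_morph sgnF2 sgnF2D (erefl : sgnF2 0 = 1)); apply: eq_bigr => i _.
rewrite mxE; case: (F2_cases (x 0 i)) => ->; first by rewrite scale0r f0 mulr0.
by rewrite scale1r mulr1 /sgnF2; case: (fpm 'e_i) => ->.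
Qed.

Lemma four_point_charF2P k (f : 'rV['F_2]_k -> int) :
  (forall x, f x = 1 \/ f x = -1) ->
  (exists a, f =1 charF2 a \/ f =1 (fun x => - charF2 a x)) <-> four_point f.
Proof.
move=> fpm.
have fsq x : f x * f x = 1 by case: (fpm x) => ->; rewrite ?mulrNN mulr1.
split=> [[a fE] | f4].
  have a4 := multiplicative_four_point (@addxx_rowF2 k) (charF2D a).
  by case: fE => fE x y z w; rewrite !fE ?mulrNN; apply: a4.
have fM := four_point_multiplicative (@addxx_rowF2 k) fsq f4.
have gpm x : f 0 * f x = 1 \/ f 0 * f x = -1.
  by case: (fpm 0) => ->; case: (fpm x) => ->; rewrite ?mulN1r ?mul1r ?opprK; auto.
have gM x y : f 0 * f (x + y) = (f 0 * f x) * (f 0 * f y).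
  by rewrite fM mulrACA fsq mul1r.
have [a gE] := sign_hom_charF2 gpm gM.
exists a; have fE x : f x = f 0 * charF2 a x by rewrite -gE mulrA fsq mul1r.
by case: (fpm 0) => f0; [left | right] => x; rewrite fE f0 ?mul1r ?mulN1r.
Qed.

Lemma odd_div_expn_mod (r k i : nat) :
  (i < k)%N -> odd ((r %% 2 ^ k) %/ 2 ^ i) = odd (r %/ 2 ^ i).
Proof.
move=> ik; rewrite {2}(divn_eq r (2 ^ k)).
have -> : (2 ^ k = 2 ^ (k - i) * 2 ^ i)%N by rewrite -expnD subnK // ltnW.
rewrite mulnA divnMDl ?expn_gt0 // oddD oddM oddX.
by rewrite -(prednK (_ : 0 < k - i)%N) ?subn_gt0 //= andbF.
Qed.

Lemma div_expn_top (r k : nat) :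
  (r < 2 ^ k.+1)%N -> (r %/ 2 ^ k = (2 ^ k <= r))%N.
Proof.
move=> hr; case: leqP => h /=; last by rewrite divn_small.
apply/eqP; rewrite eqn_leq leq_divRL ?expn_gt0 // mul1n h andbT -ltnS.
by rewrite ltn_divLR ?expn_gt0 // -expnS.
Qed.

Lemma eq_from_bits (k j c : nat) : (j < 2 ^ k)%N -> (c < 2 ^ k)%N ->
  (forall i, (i < k)%N -> odd (j %/ 2 ^ i) = odd (c %/ 2 ^ i)) -> j = c.
Proof.
elim: k j c => [|k IH] j c; first by rewrite !ltnS !leqn0 => /eqP-> /eqP->.
move=> hj hc bits; rewrite (divn_eq j 2) (divn_eq c 2) !modn2.
have := bits 0%N isT; rewrite !divn1 => ->; congr (_ * _ + _)%N.
apply: IH; rewrite ?ltn_divLR // -?expnSr // => i ik.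
by have := bits i.+1 ik; rewrite expnS -!divnMA.
Qed.

Lemma sh_entryE k r c : (r < 2 ^ k)%N -> (c < 2 ^ k)%N ->
  sh_entry k r c =
  sgnF2 (\sum_(i < k) (odd (r %/ 2 ^ i))%:R * (odd (c %/ 2 ^ i))%:R).
Proof.
elim: k r c => [|k IH] r c hr hc; first by rewrite big_ord0.
rewrite /= big_ord_recr /= sgnF2D IH ?ltn_pmod ?expn_gt0 // mulrC; congr (_ * _).
  by congr sgnF2; apply: eq_bigr => i _; rewrite !odd_div_expn_mod.
by rewrite !div_expn_top //; case: (2 ^ k <= r)%N; case: (2 ^ k <= c)%N.
Qed.

Lemma sylvester_hadamardE k (r c : 'I_(2 ^ k)) :
  sylvester_hadamard k r c = charF2 (zvec k r) (zvec k c).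
Proof.
by rewrite mxE sh_entryE //; congr sgnF2; apply: eq_bigr => i _; rewrite !mxE.
Qed.

Lemma zvec_bij k : bijective (fun j : 'I_(2 ^ k) => zvec k j).
Proof.
apply: inj_card_bij; last by rewrite card_mx !card_ord mul1n.
move=> j c /= /rowP zjc; apply/val_inj/(@eq_from_bits k); rewrite ?ltn_ord //.
move=> i ik.
by have := zjc (Ordinal ik); rewrite !mxE; case: odd; case: odd => // /(congr1 val).
Qed.

Theorem lemma1 (k : nat) (hk : (1 <= k)%N) (W : 'I_(2 ^ k) -> int)
  (hW : forall i, W i = 1 \/ W i = -1) :
  (exists r : 'I_(2 ^ k),
      (forall i, W i = sylvester_hadamard k r i) \/
      (forall i, W i = - sylvester_hadamard k r i)) <->
  (forall j c l v : 'I_(2 ^ k), uniq [:: j; c; l; v] ->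
      zvec k j + zvec k c + zvec k l + zvec k v = 0 ->
      W j * W c = W l * W v).
Proof.
have [idx zK idxK] := zvec_bij k.
apply: (iff_trans _ (four_point_transport zK idxK W)).
apply: (iff_trans _ (four_point_charF2P (fun x => hW (idx x)))).
split=> [[r Wr] | [a Wa]].
  exists (zvec k r); case: Wr => Wr; [left | right] => x /=;
    by rewrite Wr sylvester_hadamardE idxK.
exists (idx a); case: Wa => Wa; [left | right] => i;
  by rewrite sylvester_hadamardE idxK -[i in W i]zK; apply: Wa.
Qed.
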